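(* Let $(V,\omega)$ be a finite-dimensional super vector space over $\mathbb{Q}$ with an odd constant symplectic form. Then \[ \Lambda_{\gamma,\nu}[V]:=(\mathbb{Q}_+[\gamma,\nu]\otimes V^* )\oplus(\mathbb{Q}[\gamma,\nu]\otimes\mathfrak{h}_{\geq 2})\oplus\Big(\mathbb{Q}[\gamma,\nu]\otimes\bigoplus_{i=2}^\infty \big[(\mathfrak{h}_{\geq 1})^{\otimes i}\big]_{S_i}\Big) \] is a differential graded Lie subalgebra of $\mathfrak{l}'$; in particular it is a differential graded Lie algebra with the differential induced by $d=\gamma\cdot\delta+\Delta$.
   Context: Work over $\mathbb{Q}$ with super vector spaces. $\mathfrak{h}=\mathfrak{h}[V]=\mathrm{DR}^0(V)=\bigoplus_{i\ge0}((V^* )^{\otimes i})_{\mathbb{Z}/i}$ is the space of noncommutative $0$-forms (cyclic words in $V^*$) with its odd bracket $\{-,-\}$ and odd cobracket $\Delta$ (given, in coordinates $x_1..x_n$ even, $\xi_1..\xi_n$ odd with $\omega=\sum dx_id\xi_i$ and $\langle x_i,\xi_j\rangle^{-1}=\langle\xi_j,x_i\rangle^{-1}=\delta_{ij}$, by: $\{a_1\cdots a_n,b_1\cdots b_m\}=\sum_{i,j}\pm\langle a_i,b_j\rangle^{-1}(z_{n-1}^{i-1}[a_1\cdots\widehat{a_i}\cdots a_n])(z_{m-1}^{j-1}[b_1\cdots\widehat{b_j}\cdots b_m])$, $z_k=(k\;k-1\cdots1)$, and $\Delta(a_1\cdots a_n)=\frac12\sum_{i<j}\pm\langle a_i,a_j\rangle^{-1}[1+(1\,2)][(a_{i+1}\cdots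 a_{j-1})\otimes(a_{j+1}\cdots a_na_1\cdots a_{i-1})]$, with Koszul signs). $\mathfrak{l}:=\mathbb{Q}[\gamma]\otimes S(\mathfrak{h})$ is the differential graded Lie algebra with the odd bracket obtained by extending $\{-,-\}$ to the symmetric algebra $S(\mathfrak{h})$ by the Leibniz rule (and $\mathbb{Q}[\gamma]$-linearly), and differential $d=\gamma\delta+\Delta$, where $\delta$ is the Chevalley–Eilenberg differential $\delta(g_1\cdots g_n)=\sum_{i<j}\pm\{g_i,g_j\}g_1\cdots\widehat{g_i}\cdots\widehat{g_j}\cdots g_n$ and $\Delta$ is the cobracket extended to $S(\mathfrak{h})$ as a derivation of the product. Notation: $\mathfrak{h}_{\ge n}:=\bigoplus_{i\ge n}((V^* )^{\otimes i})_{\mathbb{Z}/i}$, so $\mathfrak{h}=\mathbb{Q}\oplus\mathfrak{h}_{\ge1}$ and $\mathfrak{h}_{\ge1}=V^*\oplus\mathfrak{h}_{\ge2}$. Identifying $S(\mathbb{Q})$ with $\mathbb{Q}[\nu]$ (where $\nu$ is the constant $0$-form $1\in\mathfrak{h}$), $\mathfrak{l}=\mathbb{Q}[\gamma,\nu]\otimes S(\mathfrak{h}_{\ge1})$; the bracket and differential are $\mathbb{Q}[\gamma,\nu]$-linear. The summand $\mathbb{Q}[\gamma,\nu]=\mathbb{Q}[\gamma,\nu]\otimes S^0(\mathfrak{h}_{\ge1})$ is an ideal with trivial bracket, and $\mathfrak{l}':=\mathbb{Q}[\gamma,\nu]\otimes\bigoplus_{i\ge1}[(\mathfrak{h}_{\ge1})^{\otimes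 i}]_{S_i}$ is the quotient differential graded Lie algebra. $\mathbb{Q}_+[\gamma,\nu]$ is the ideal of polynomials vanishing at the origin. *)

From HB Require Import structures.
From mathcomp Require Import all_boot all_order all_algebra.
From mathcomp Require Import monalg.

Set Implicit Arguments.
Unset Strict Implicit.
Unset Printing Implicit Defensive.

Import GRing.Theory.
Local Open Scope ring_scope.

(* (V, omega) in Darboux coordinates: x_1..x_n even, xi_1..xi_n odd,   *)
(* omega = sum dx_i dxi_i.  The letters (basis of V^* ) are encoded as *)
(* (i, false) = x_i (even) and (i, true) = xi_i (odd).                 *)
Section Construction.
Variable n : nat.

Definition letter := ('I_n * bool)%type.
Definition word := seq letter.

Definition lpar (a : letter) : bool := a.2.
Definition wpar (w : word) : bool := foldr addb false (map lpar w).
Definition spar (ws : seq word) : bool := foldr addb false (map wpar ws).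

Definition pairing (a b : letter) : rat :=
  if (a.1 == b.1) && (a.2 != b.2) then 1 else 0.
Definition pairing_at (a : word) (i : nat) (b : word) (j : nat) : rat :=
  match drop i a, drop j b with
  | x :: _, y :: _ => pairing x y
  | _, _ => 0
  end.

Definition ksign (b : bool) : rat := if b then -1 else 1.

(* Koszul sign of the rotation  rot k w = drop k w ++ take k w  *)
Definition rotsign (w : word) (k : nat) : bool :=
  wpar (take k w) && wpar (drop k w).

(* ---- cyclic words: the class of w in ((V^* )^{(x) l})_{Z/l} ------- *)
Definition wkey (w : word) : nat := pickle w.
Definition cyc_rep (w : word) : word :=
  foldr (fun u m => if (wkey u < wkey m)%N then u else m) w
        [seq rot k w | k <- iota 0 (size w)].
(* the class of w vanishes iff some rotation fixes w with sign -1 *)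
Definition cyc_zero (w : word) : bool :=
  has (fun k => (rot k w == w) && rotsign w k) (iota 0 (size w)).
Definition cyc_idx (w : word) : nat :=
  find (fun k => rot k w == cyc_rep w) (iota 0 (size w)).
(* [w] = c * [cyc_rep w] *)
Definition cyc (w : word) : rat * word :=
  (if cyc_zero w then 0 else ksign (rotsign w (cyc_idx w)), cyc_rep w).

(* ---- monomials of Q[gamma,nu] (x) S(h_{>=1}) ---------------------- *)
(* (g, k, ws) stands for gamma^g nu^k ws_0 ws_1 ... ; the nu factor    *)
(* is the constant 0-form 1 in h (empty cyclic word).                  *)
Definition mono := (nat * nat * seq word)%type.
Definition lalg := {malg rat[mono]}.

(* graded-commutative sorting (insertion sort with Koszul sign) *)
Fixpoint ins (u : word) (s : seq word) : bool * seq word :=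
  match s with
  | [::] => (false, [:: u])
  | v :: s' => if (wkey v < wkey u)%N then
                 let: (b, t) := ins u s' in (b (+) (wpar u && wpar v), v :: t)
               else (false, u :: s)
  end.
Fixpoint ssort (s : seq word) : bool * seq word :=
  match s with
  | [::] => (false, [::])
  | u :: s' => let: (b, t) := ssort s' in
               let: (b', t') := ins u t in (b (+) b', t')
  end.

(* a repeated odd factor (odd elements square to zero in S) *)
Definition repodd (s : seq word) : bool :=
  has (fun i => (nth [::] s i == nth [::] s i.+1) && wpar (nth [::] s i))
      (iota 0 (size s).-1).

(* normal form of  c * gamma^g nu^k ws  in l' = l / (Q[gamma,nu] (x) S^0) *)
Definition norm (c : rat) (m : mono) : lalg :=
  let: (g, k, ws) := m in
  let cs := map cyc ws in
  let c' := c * \prod_(p <- cs) p.1 in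
  let ne := [seq p.2 | p <- cs & p.2 != [::]] in
  let k' := (k + count (fun p => p.2 == [::]) cs)%N in
  let: (b, srt) := ssort ne in
  if (srt == [::]) || repodd srt then 0
  else << (c' * ksign b) *g ((g, k', srt) : mono) >>.

Definition normal (m : mono) : bool :=
  let: (g, k, ws) := m in
  [&& ws != [::],
      all (fun w => [&& w != [::], cyc_rep w == w & ~~ cyc_zero w]) ws,
      sorted (fun u v => (wkey u <= wkey v)%N) ws & ~~ repodd ws].

Definition rem_at (i : nat) (s : seq word) := take i s ++ drop i.+1 s.

(* ---- the odd bracket on h (on representatives) ------------------ *)
(* {a_1..a_p, b_1..b_q} = sum_{i,j} +- <a_i,b_j>^{-1}                 *)
(*        [a_{i+1}..a_p a_1..a_{i-1} b_{j+1}..b_q b_1..b_{j-1}]        *)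
Definition hbr (a b : word) : seq (rat * word) :=
  [seq (ksign (rotsign a i.+1 (+) rotsign b j) * pairing_at a i b j,
        take (size a).-1 (rot i.+1 a) ++ behead (rot j b))
  | i <- iota 0 (size a), j <- iota 0 (size b)].

(* ---- the cobracket on h, with values in S^2(h) ------------------ *)
(* Delta(a_1..a_p) = sum_{i<j} +- <a_i,a_j>^{-1}                       *)
(*                    (a_{i+1}..a_{j-1}) . (a_{j+1}..a_p a_1..a_{i-1})  *)
(* (the image in S^2 h of (1/2)[1+(12)] applied to the tensor)         *)
Definition hcobr (a : word) : seq (rat * (word * word)) :=
  [seq let u := take (j - i.+1)%N (drop i.+1 a) in
       (ksign (rotsign a i (+) (wpar (take 1 (drop j a)) && wpar u))
          * pairing_at a i a j,
        (u, drop j.+1 a ++ take i a))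
  | i <- iota 0 (size a), j <- iota i.+1 (size a - i.+1)%N].

(* ---- bracket on S(h) extended by the Leibniz rule ---------------- *)
Definition mbr (m1 m2 : mono) : lalg :=
  let: (g1, k1, ws) := m1 in
  let: (g2, k2, vs) := m2 in
  \sum_(i <- iota 0 (size ws)) \sum_(j <- iota 0 (size vs))
    let u := nth [::] ws i in
    let v := nth [::] vs j in
    let s := (wpar u && spar (drop i.+1 ws)) (+) (wpar v && spar (take j vs)) in
    \sum_(t <- hbr u v)
      norm (ksign s * t.1) ((g1 + g2)%N, (k1 + k2)%N, rem_at i ws ++ t.2 :: rem_at j vs).

(* ---- gamma * delta  (delta = Chevalley-Eilenberg differential) ---- *)
Definition mdelta (m : mono) : lalg :=
  let: (g, k, ws) := m in
  \sum_(i <- iota 0 (size ws)) \sum_(j <- iota 0 (size ws) | (i < j)%N)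
    let u := nth [::] ws i in
    let v := nth [::] ws j in
    let s := (wpar u && spar (take i ws)) (+) (wpar v && spar (rem_at i (take j ws))) in
    \sum_(t <- hbr u v)
      norm (ksign s * t.1) (g.+1, k, t.2 :: rem_at i (rem_at j ws)).

(* ---- Delta extended to S(h) as a derivation ---------------------- *)
Definition mDelta (m : mono) : lalg :=
  let: (g, k, ws) := m in
  \sum_(i <- iota 0 (size ws))
    \sum_(t <- hcobr (nth [::] ws i))
      norm (ksign (spar (take i ws)) * t.1)
           (g, k, take i ws ++ t.2.1 :: t.2.2 :: drop i.+1 ws).

Definition lbr (X Y : lalg) : lalg :=
  \sum_(m1 <- finmap.enum_fset (msupp X)) \sum_(m2 <- finmap.enum_fset (msupp Y)) (X@_m1 * Y@_m2) *: mbr m1 m2.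

Definition ldiff (X : lalg) : lalg :=
  \sum_(m <- finmap.enum_fset (msupp X)) X@_m *: (mdelta m + mDelta m).

Definition in_l' (X : lalg) : bool := all normal (finmap.enum_fset (msupp X)).

Definition lam_mono (m : mono) : bool :=
  let: (g, k, ws) := m in
  normal m && [|| (1 < size ws)%N, (1 < size (head [::] ws))%N | (0 < g + k)%N].
Definition in_Lambda (X : lalg) : bool := all lam_mono (finmap.enum_fset (msupp X)).

End Construction.

From mathcomp Require Import all_boot all_order all_algebra.
From mathcomp Require Import monalg finmap zify.

Set Implicit Arguments.
Unset Strict Implicit.
Unset Printing Implicit Defensive.

Import GRing.Theory.
Local Open Scope ring_scope.

(* Lambda is spanned by the normal monomials of l' other than the bare letters
   (a single cyclic word of length one, with no gamma and no nu).  Normalizing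
   a monomial gamma^g nu^k w_1 ... w_r only rotates and reorders the words and
   turns empty words into factors nu, so it produces a bare letter only from a
   bare letter.  Before normalization, gamma delta raises the gamma-degree,
   Delta splits a word into two factors, and the bracket of two monomials of
   Lambda of degree zero in gamma and nu is either a product of at least two
   words or the bracket {u, v} of two words of length at least two, whose
   terms have length |u| + |v| - 2 >= 2. *)

Section Supported.
Variables (K : choiceType) (R : nzRingType) (P : pred K).
Implicit Types X Y : {malg R[K]}.

Definition supported X := {subset msupp X <= P}.

Lemma supportedP X : reflect (supported X) (all P (enum_fset (msupp X))).
Proof. exact: allP. Qed.

Lemma supported0 : supported 0.
Proof. by move=> m; rewrite msupp0. Qed.

Lemma supportedD X Y : supported X -> supported Y -> supported (X + Y).
Proof.
move=> sX sY m /(fsubsetP (msuppD_le _ _)); rewrite inE.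
by case/orP; [apply: sX | apply: sY].
Qed.

Lemma supportedZ c X : supported X -> supported (c *: X).
Proof. by move=> sX m /(fsubsetP (msuppZ_le _ _)); apply: sX. Qed.

Lemma supported_sum (I : eqType) (r : seq I) (Q : pred I) (F : I -> {malg R[K]}) :
  (forall i, i \in r -> Q i -> supported (F i)) ->
  supported (\sum_(i <- r | Q i) F i).
Proof.
move=> sF; rewrite big_seq_cond.
by apply: big_ind => [|X Y|i /andP[]]; [apply: supported0 | apply: supportedD | apply: sF].
Qed.

End Supported.

Section SeqArgMin.
Variables (T : eqType) (f : T -> nat).

Definition seq_argmin (x : T) (s : seq T) : T :=
  foldr (fun u m => if (f u < f m)%N then u else m) x s.

Lemma seq_argmin_mem x s : seq_argmin x s \in x :: s.
Proof.
elim: s => [|a s IH] /=; first exact: mem_head.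
case: ifP => _; first by rewrite !inE eqxx orbT.
by move: IH; rewrite !inE => /orP[] ->; rewrite ?orbT.
Qed.

Lemma seq_argmin_min x s u : u \in x :: s -> (f (seq_argmin x s) <= f u)%N.
Proof.
elim: s u => [|a s IH] u; first by rewrite inE => /eqP->.
rewrite /= !inE; case: ltnP => [lt_a|le_a] /or3P[/eqP->|/eqP->|us] //.
- exact/ltnW/(leq_trans lt_a)/IH/mem_head.
- by apply/ltnW/(leq_trans lt_a)/IH; rewrite inE us orbT.
- exact/IH/mem_head.
- by apply: IH; rewrite inE us orbT.
Qed.

End SeqArgMin.

Section Lambda.
Variable n : nat.
Implicit Types (u v w : word n) (s ws : seq (word n)).

Lemma wparE w : wpar w = odd (count (@lpar n) w).
Proof. by rewrite /wpar; elim: w => //= a w ->; rewrite oddD oddb. Qed.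

Lemma wpar_cat u v : wpar (u ++ v) = wpar u (+) wpar v.
Proof. by rewrite !wparE count_cat oddD. Qed.

Lemma wpar_perm u v : perm_eq u v -> wpar u = wpar v.
Proof. by rewrite !wparE => /permP->. Qed.

Lemma wpar_rot k w : wpar (rot k w) = wpar w.
Proof. by apply: wpar_perm; rewrite perm_rot. Qed.

Lemma rotsignE w k : rotsign w k = wpar (take k w) && ~~ wpar w.
Proof.
have := wpar_cat (take k w) (drop k w); rewrite cat_take_drop /rotsign => ->.
by case: (wpar (take k w)); case: (wpar (drop k w)).
Qed.

(* A witness k for w also works for rot 1 w: the letter moved to the end is
   the k-th letter of the k-periodic word w, so the first k letters keep their
   parity. *)
Lemma cyc_zero_rot1 w : cyc_zero w -> cyc_zero (rot 1 w).
Proof.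
case: w => [//|a s] /hasP[k]; rewrite mem_iota add0n => /andP[_ ltks].
rewrite rotsignE => /and3P[/eqP rotk par_take odd_w].
case: k => [//|k] in ltks rotk par_take *.
have nth_k : nth a s k = a.
  have := congr1 (nth a ^~ 0) rotk.
  by rewrite /rot nth_cat size_drop subn_gt0 ltks nth_drop addn0.
apply/hasP; exists k.+1; first by rewrite mem_iota size_rot.
rewrite rotsignE wpar_rot odd_w andbT rot_rot rotk eqxx /=.
rewrite rot1_cons -cats1 takel_cat // (take_nth a) // nth_k.
by rewrite (@wpar_perm _ (a :: take k s)) ?perm_rcons.
Qed.

Lemma cyc_zero_rot m w : cyc_zero w -> cyc_zero (rot m w).
Proof.
move=> zw; elim: m => [|m IH]; first by rewrite rot0.
have [ltm|/leqW lem] := ltnP m (size w); last by rewrite rot_oversize.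
by rewrite rotS // cyc_zero_rot1.
Qed.

Lemma cyc_zero_rotE m w : cyc_zero (rot m w) = cyc_zero w.
Proof.
apply/idP/idP; last exact: cyc_zero_rot.
by move/(cyc_zero_rot (size (rot m w) - m)); rewrite -/(rotr m _) rotK.
Qed.

Definition rotations w := w :: [seq rot k w | k <- iota 0 (size w)].

Lemma rotationsP u w : reflect (exists i, u = rot i w) (u \in rotations w).
Proof.
apply: (iffP idP) => [|[i ->]].
  rewrite inE => /predU1P[->|/mapP[k _ ->]]; last by exists k.
  by exists 0%N; rewrite rot0.
have [/rot_oversize->|lti] := leqP (size w) i; first exact: mem_head.
by rewrite inE; apply/orP; right; apply/mapP; exists i; rewrite ?mem_iota.
Qed.

Lemma cyc_rep_rot w : exists i, cyc_rep w = rot i w.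
Proof. exact/rotationsP/seq_argmin_mem. Qed.

Lemma cyc_rep_min w i : (wkey (cyc_rep w) <= wkey (rot i w))%N.
Proof. by apply: seq_argmin_min; apply/rotationsP; exists i. Qed.

Lemma size_cyc_rep w : size (cyc_rep w) = size w.
Proof. by have [i ->] := cyc_rep_rot w; rewrite size_rot. Qed.

Lemma cyc_rep_eq_nil w : (cyc_rep w == [::]) = (w == [::]).
Proof. by rewrite -!size_eq0 size_cyc_rep. Qed.

Lemma cyc_rep_id w : cyc_rep (cyc_rep w) = cyc_rep w.
Proof.
have [j ej] := cyc_rep_rot w; have [i ei] := cyc_rep_rot (cyc_rep w).
apply: (pcan_inj (@choice.pickleK _)); apply/eqP; rewrite eqn_leq.
apply/andP; split; first by have := cyc_rep_min (cyc_rep w) 0; rewrite rot0.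
by rewrite ei {2}ej rot_rot_add cyc_rep_min.
Qed.

Lemma cyc_zero_rep w : cyc_zero (cyc_rep w) = cyc_zero w.
Proof. by have [i ->] := cyc_rep_rot w; rewrite cyc_zero_rotE. Qed.

Lemma cyc_coef_eq0 w : ((cyc w).1 == 0) = cyc_zero w.
Proof.
rewrite /cyc /ksign; case: cyc_zero; rewrite ?eqxx //.
by case: rotsign; rewrite ?oppr_eq0 oner_eq0.
Qed.

Local Notation key_le := (fun u v : word n => (wkey u <= wkey v)%N).

Lemma ins_perm u s : perm_eq (ins u s).2 (u :: s).
Proof.
elim: s => [|v s IH] //=; case: ifP => _ //.
case: (ins u s) IH => b t /= IH.
rewrite -(perm_cons v) in IH; apply: (perm_trans IH).
by apply/permP => p /=; rewrite addnCA.
Qed.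

Lemma ins_path x u s : key_le x u -> path key_le x s -> path key_le x (ins u s).2.
Proof.
elim: s x => [|v s IH] x /= le_xu; first by rewrite le_xu.
case/andP=> le_xv vs; case: ifP => lt_vu.
  by case: (ins u s) (IH v (ltnW lt_vu) vs) => b t /= ->; rewrite le_xv.
by rewrite /= le_xu vs andbT leqNgt lt_vu.
Qed.

Lemma ins_sorted u s : sorted key_le s -> sorted key_le (ins u s).2.
Proof.
case: s => [|v s] //= vs; case: ifP => lt_vu.
  by case: (ins u s) (ins_path (ltnW lt_vu) vs).
by rewrite /= leqNgt lt_vu vs.
Qed.

Lemma ssort_perm s : perm_eq (ssort s).2 s.
Proof.
elim: s => [|u s IH] //=; case: (ssort s) IH => b t /= IH.
case: (ins u t) (ins_perm u t) => b' t' /= pt'.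
by apply: (perm_trans pt'); rewrite perm_cons.
Qed.

Lemma ssort_sorted s : sorted key_le (ssort s).2.
Proof.
elim: s => [|u s IH] //=; case: (ssort s) IH => b t /= IH.
by case: (ins u t) (ins_sorted u IH).
Qed.

Lemma msupp_norm c g k ws m : m \in msupp (norm c (g, k, ws)) ->
  [/\ normal m, m.1 = (g, k + count (pred1 [::]) ws)%N
    & perm_eq m.2 [seq cyc_rep w | w <- ws & w != [::]]].
Proof.
rewrite /norm /=.
have -> : [seq p.2 | p <- map (@cyc n) ws & p.2 != [::]] =
          [seq cyc_rep w | w <- ws & w != [::]].
  rewrite filter_map -map_comp; congr map.
  by apply: eq_filter => w; rewrite /= cyc_rep_eq_nil.
have -> : count (fun p => p.2 == [::]) (map (@cyc n) ws) = count_mem [::] ws.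
  by rewrite count_map; apply: eq_count => w; rewrite /= cyc_rep_eq_nil.
have := ssort_perm [seq cyc_rep w | w <- ws & w != [::]].
have := ssort_sorted [seq cyc_rep w | w <- ws & w != [::]].
case: ssort => b srt /= srt_sorted srt_perm.
case: ifP => [_|/norP[srt_nil srt_repodd]]; first by rewrite msupp0.
rewrite msuppU; case: eqP => [_|/eqP coef_nz]; first by rewrite inE.
rewrite inE => /eqP-> /=; split=> //.
have nz_ws : {in ws, forall w, ~~ cyc_zero w}.
  move: coef_nz; rewrite !mulf_eq0 !negb_or => /andP[/andP[_ +] _].
  rewrite prodf_seq_neq0 all_map => /allP nz w w_ws.
  by have := nz w w_ws; rewrite /= cyc_coef_eq0.
rewrite /normal srt_nil srt_sorted srt_repodd /= !andbT.
apply/allP=> u; rewrite (perm_mem srt_perm) => /mapP[w]; rewrite mem_filter.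
case/andP=> w_nil w_ws ->.
by rewrite cyc_rep_eq_nil w_nil cyc_rep_id eqxx cyc_zero_rep nz_ws.
Qed.

Definition bare_letter (m : mono n) : bool :=
  if m is (O, O, [:: [:: _]]) then true else false.

Lemma lam_monoE m : lam_mono m = normal m && ~~ bare_letter m.
Proof.
case: m => [[g k] ws]; rewrite /lam_mono.
case nm: (normal _) => //=; move: nm; rewrite /normal.
case: ws => [|w ws] //= /and3P[/andP[/and3P[w_nil _ _] _] _ _].
case: g k => [|g] [|k]; rewrite ?addn0 ?addnS ?orbT //.
by case: ws; case: w w_nil => [|a [|b w]].
Qed.

Lemma bare_letterP m :
  reflect (exists a, m = (0, 0, [:: [:: a]])%N) (bare_letter m).
Proof.
apply: (iffP idP) => [|[a ->] //].
by case: m => [[[|g] [|k]] [|[|a [|? ?]] [|? ?]]] // _; exists a.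
Qed.

Lemma norm_lam c m m' : m' \in msupp (norm c m) -> ~~ bare_letter m -> lam_mono m'.
Proof.
case: m => [[g k] ws] /msupp_norm[nm' em' pm']; rewrite lam_monoE nm' /=.
apply: contra => /bare_letterP[a eq_m']; rewrite eq_m' /= in em' pm'.
case: em' => <- /esym/eqP; rewrite addn_eq0 => /andP[/eqP-> +].
rewrite eqn0Ngt -has_count => /hasPn ws_nz.
have /all_filterP ws_nzE : all (fun w => w != [::]) ws by apply/allP.
rewrite ws_nzE perm_sym in pm'.
have /(_ isT) := @perm_small_eq _ _ _ ^~ pm'.
case: ws {ws_nz ws_nzE pm'} => [|w [|//]] // [/(congr1 size)].
by rewrite size_cyc_rep; case: w => [|b [|]] // _; apply/bare_letterP; exists b.
Qed.

Lemma size_rem_at i s : (i < size s)%N -> size (rem_at i s) = (size s).-1.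
Proof. by move=> lt_is; rewrite /rem_at size_cat size_take lt_is size_drop; lia. Qed.

Lemma hbr_size u v t : t \in hbr u v -> size t.2 = ((size u).-1 + (size v).-1)%N.
Proof.
case/allpairsP=> -[i j] [_ _ ->] /=.
by rewrite size_cat size_takel ?size_rot ?leq_pred // size_behead size_rot.
Qed.

Lemma mbr_lam m1 m2 :
  lam_mono m1 -> lam_mono m2 -> supported (@lam_mono n) (mbr m1 m2).
Proof.
case: m1 m2 => [[g1 k1] ws] [[g2 k2] vs] lam1 lam2.
apply: supported_sum => i; rewrite mem_iota => /andP[_ lt_iw] _.
apply: supported_sum => j; rewrite mem_iota => /andP[_ lt_jv] _.
apply: supported_sum => t t_uv _ m' /norm_lam; apply.
apply/bare_letterP => -[a [g0 k0 e]].
have := congr1 size e; rewrite size_cat /= !size_rem_at //.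
move: lam1 lam2 e; move/eqP: g0 k0; rewrite addn_eq0 => /andP[/eqP-> /eqP->] /eqP.
rewrite addn_eq0 => /andP[/eqP-> /eqP->] lam1 lam2 e sz.
have sw : size ws = 1%N by move: lt_iw sz; rewrite add0n; lia.
have sv : size vs = 1%N by move: lt_jv sz; rewrite add0n; lia.
case: ws vs sw sv lam1 lam2 lt_iw lt_jv e t_uv {sz} => [|u [|//]] // [|v [|//]] // _ _.
move=> /andP[_ lam_u] /andP[_ lam_v]; rewrite !add0n !ltnS !leqn0.
move=> /eqP-> /eqP-> /= [ta] /hbr_size.
by move: lam_u lam_v; rewrite ta /= addn0 ltnn !orbF; lia.
Qed.

Lemma mdelta_lam m : supported (@lam_mono n) (mdelta m).
Proof.
case: m => [[g k] ws]; apply: supported_sum => i _ _.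
apply: supported_sum => j _ _; apply: supported_sum => t _ _ m' /norm_lam; apply.
by apply/bare_letterP => -[].
Qed.

Lemma mDelta_lam m : supported (@lam_mono n) (mDelta m).
Proof.
case: m => [[g k] ws]; apply: supported_sum => i _ _.
apply: supported_sum => t _ _ m' /norm_lam; apply.
by apply/bare_letterP => -[a [_ _ /(congr1 size)]]; rewrite size_cat /= !addnS.
Qed.

End Lambda.

Theorem theorem3p5 (n : nat) :
  (forall X : lalg n, in_Lambda X -> in_l' X) /\
  in_Lambda (0 : lalg n) /\
  (forall (c : rat) (X Y : lalg n),
      in_Lambda X -> in_Lambda Y -> in_Lambda (c *: X + Y)) /\
  (forall X Y : lalg n, in_Lambda X -> in_Lambda Y -> in_Lambda (lbr X Y)) /\
  (forall X : lalg n, in_Lambda X -> in_Lambda (ldiff X)).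
Proof.
split.
  move=> X /supportedP lamX; apply/supportedP => m /lamX.
  by rewrite -!topredE /= lam_monoE => /andP[].
split; first exact/supportedP/supported0.
split.
  move=> c X Y /supportedP lamX /supportedP lamY.
  exact/supportedP/supportedD/lamY/supportedZ.
split.
  move=> X Y /supportedP lamX /supportedP lamY; apply/supportedP.
  apply: supported_sum => m1 m1X _; apply: supported_sum => m2 m2Y _.
  by apply/supportedZ/mbr_lam; [apply: lamX | apply: lamY].
move=> X _; apply/supportedP/supported_sum => m _ _.
exact/supportedZ/supportedD/mDelta_lam/mdelta_lam.
Qed.
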